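(* For $\phi\in L^\infty$, the slant H-Toeplitz operator $V_\phi$ is self-adjoint if and only if $\phi=0$.
   Context: $L^2=L^2(\mathbb{T})$ with orthonormal basis $e_n(z)=z^n$, $n\in\mathbb{Z}$; $H^2$ is the closed span of $\{e_n\}_{n\ge0}$, $P:L^2\to H^2$ the orthogonal projection, $M_\phi$ multiplication by $\phi$. $W:L^2\to L^2$: $We_n=e_{n/2}$ for $n$ even, $0$ for $n$ odd. $K:H^2\to L^2$: $Ke_{2n}=e_n$, $Ke_{2n+1}=e_{-n-1}$ ($n\ge0$). The slant H-Toeplitz operator is $V_\phi=WPM_\phi K:H^2\to H^2$. *)

From HB Require Import structures.
From mathcomp Require Import all_boot all_order all_algebra.
From mathcomp Require Import all_classical all_reals all_analysis.
From mathcomp Require Import complex.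
Set Implicit Arguments. Unset Strict Implicit. Unset Printing Implicit Defensive.
Import Order.TTheory GRing.Theory Num.Theory.
Import numFieldNormedType.Exports.
Local Open Scope classical_set_scope.
Local Open Scope ring_scope.

(* The circle T is parametrised by t in [0, 2pi] (z = e^{it}); a symbol  *)
(* phi in L^oo(T) is a function t |-> phi(e^{it}) : R -> R[i].            *)
(* L^2(T) is identified with l^2(Z) through the orthonormal basis e_n:    *)
(* an element is its sequence of coordinates c : int -> R[i].             *)

Section SlantHToeplitz.
Variable R : realType.
Local Notation C := R[i].
Local Notation leb := (@lebesgue_measure R).

Definition reC (z : C) : R := @complex.Re R z.
Definition imC (z : C) : R := @complex.Im R z.

Definition cmod (z : C) : R := Num.sqrt (reC z ^+ 2 + imC z ^+ 2).

Definition circ : set R := `[0%R, (2 * pi)%R].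

Definition Linfty (phi : R -> C) : Prop :=
  measurable_fun circ (fun t => reC (phi t)) /\
  measurable_fun circ (fun t => imC (phi t)) /\
  exists M : R, {ae leb, forall t, circ t -> cmod (phi t) <= M}.

Definition ae_zero (phi : R -> C) : Prop :=
  {ae leb, forall t, circ t -> phi t = 0}.

(* n-th Fourier coefficient (1/2pi) int_0^{2pi} phi(e^{it}) e^{-int} dt *)
Definition fourier (phi : R -> C) (n : int) : C :=
  @Complex R
    ((2 * pi)^-1 * Rintegral leb circ
       (fun t => reC (phi t) * cos (n%:~R * t) + imC (phi t) * sin (n%:~R * t)))
    ((2 * pi)^-1 * Rintegral leb circ
       (fun t => imC (phi t) * cos (n%:~R * t) - reC (phi t) * sin (n%:~R * t))).

Definition psumZ (f : int -> C) (N : nat) : C :=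
  \sum_(i < (2 * N)%N) f (i%:Z - N%:Z).

Definition sumZ (f : int -> C) : C :=
  @Complex R (limn (fun N => reC (psumZ f N))) (limn (fun N => imC (psumZ f N))).

Definition inL2 (c : int -> C) : Prop :=
  cvgn (fun N => \sum_(i < (2 * N)%N) (cmod (c (i%:Z - N%:Z))) ^+ 2).

(* elements of H^2 : closed span of e_n, n >= 0 *)
Definition inH2 (c : int -> C) : Prop :=
  inL2 c /\ (forall n : int, n < 0 -> c n = 0).

Definition inner (c d : int -> C) : C := sumZ (fun n => c n * @conjc R (d n)).

Definition Pproj (c : int -> C) : int -> C := fun n => if 0 <= n then c n else 0.

(* M_phi : multiplication by phi, i.e. convolution with its Fourier coefficients *)
Definition Mult (phi : R -> C) (c : int -> C) : int -> C :=
  fun n => sumZ (fun k => fourier phi (n - k) * c k).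

(* W e_n = e_{n/2} for n even, 0 for n odd *)
Definition Wop (c : int -> C) : int -> C := fun m => c (2 * m).

(* K e_{2n} = e_n,  K e_{2n+1} = e_{-n-1}  (n >= 0) *)
Definition Kop (c : int -> C) : int -> C :=
  fun m => if 0 <= m then c (2 * m) else c (- (2 * m) - 1).

Definition Vop (phi : R -> C) (c : int -> C) : int -> C :=
  Wop (Pproj (Mult phi (Kop c))).

Definition selfadjoint_H2 (T : (int -> C) -> (int -> C)) : Prop :=
  forall f g, inH2 f -> inH2 g -> inner (T f) g = inner f (T g).

End SlantHToeplitz.

(* Write c_n for the Fourier coefficients of phi.  Testing self-adjointness
   of V_phi on basis vectors e_i, e_j gives c_(2j - k(i)) = conj c_(2i - k(j)),
   where K e_i = e_k(i).  Taking i = 0 yields c_(p+1) = conj c_(4p+2) and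
   c_(-p) = conj c_(4p), and (i, j) = (4, 1) gives c_0 = conj c_9.  Iterating
   p |-> 4p + 1 keeps |c_(p+1)| constant along indices tending to infinity, so
   the Riemann-Lebesgue lemma (from Bessel's inequality) forces every c_n to
   vanish.  A bounded function whose Fourier coefficients all vanish is
   orthogonal to every trigonometric polynomial; polynomials in
   (1 + cos (t - x0)) / 2 converge boundedly to indicators of arcs, so by
   dominated convergence its integral over every arc vanishes, and Lebesgue's
   differentiation theorem makes it zero almost everywhere.  Conversely, if
   phi = 0 a.e. all c_n vanish and so does V_phi. *)

From HB Require Import structures.
From mathcomp Require Import all_boot all_order all_algebra.
From mathcomp Require Import all_classical all_reals all_analysis.
From mathcomp Require Import complex measurable_realfun.
From mathcomp Require Import zify ring lra.
Set Implicit Arguments. Unset Strict Implicit. Unset Printing Implicit Defensive.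
Import Order.TTheory GRing.Theory Num.Theory.
Import numFieldNormedType.Exports.
Local Open Scope classical_set_scope.
Local Open Scope ring_scope.

Section BasisVectors.
Variable R : realType.
Local Notation C := R[i].

Lemma sum_centered_single (V : zmodType) (g : int -> V) (j : int) (N : nat) :
  (forall n, n != j -> g n = 0) -> (absz j < N)%N ->
  \sum_(i < (2 * N)%N) g (i%:Z - N%:Z) = g j.
Proof.
move=> g0 jN; have jN2 : (absz (j + N%:Z)%R < 2 * N)%N by lia.
rewrite (bigD1 (Ordinal jN2)) //= big1 ?addr0; first by congr g; lia.
move=> i /eqP ij; apply: g0; apply/eqP => e; apply: ij; apply: val_inj => /=; lia.
Qed.

Lemma sumZ_single (f : int -> C) (j : int) :
  (forall n, n != j -> f n = 0) -> sumZ f = f j.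
Proof.
move=> f0; have psum_ev : \forall N \near \oo, psumZ f N = f j.
  by exists (absz j).+1 => // N /= jN; apply: sum_centered_single.
rewrite /sumZ; move: psum_ev; case: (f j) => a b psum_ev.
by congr Complex; apply: lim_near_cst => //; apply: filterS psum_ev => N ->.
Qed.

Lemma sumZ0 : sumZ (fun _ : int => (0 : C)) = 0.
Proof. by rewrite (@sumZ_single _ 0). Qed.

Definition evec (j : int) : int -> C := fun m => if m == j then 1 else 0.

Lemma evec_neq j m : m != j -> evec j m = 0.
Proof. by rewrite /evec => /negbTE ->. Qed.

Lemma inH2_evec (p : nat) : inH2 (evec p).
Proof.
split => [|n n0]; last by rewrite evec_neq //; apply/eqP; lia.
apply: (@is_cvg_near_cst _ _ (cmod (evec p p) ^+ 2)).
exists p.+1 => // N /= pN.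
apply: (@sum_centered_single R^o (fun n => cmod (evec p n) ^+ 2)) => // n np.
by rewrite evec_neq // /cmod /reC /imC /= expr0n /= addr0 sqrtr0 expr0n.
Qed.

Definition Kindex (i : nat) : int := if odd i then - (i./2)%:Z - 1 else (i./2)%:Z.

Lemma Kop_evec (i : nat) : Kop (evec i) = evec (Kindex i).
Proof.
apply/funext => m; rewrite /Kop /evec /Kindex.
have := odd_double_half i; case: ifP => m0; case: (odd i) => /= hi;
  by case: eqP => e1; case: eqP => e2 //; lia.
Qed.

Lemma Mult_evec (phi : R -> C) (k n : int) : Mult phi (evec k) n = fourier phi (n - k).
Proof.
rewrite /Mult (@sumZ_single _ k) => [|l lk]; last by rewrite evec_neq ?mulr0.
by rewrite /evec eqxx mulr1.
Qed.

Lemma Vop_evec (phi : R -> C) (i : nat) (j : int) : 0 <= j ->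
  Vop phi (evec i) j = fourier phi (2 * j - Kindex i).
Proof.
move=> j0; rewrite /Vop /Wop /Pproj Kop_evec Mult_evec.
by have -> : (0 <= 2 * j) = true by lia.
Qed.

Lemma inner_evecr (c : int -> C) (j : int) : inner c (evec j) = c j.
Proof.
rewrite /inner (@sumZ_single _ j) => [|n nj]; last by rewrite evec_neq // conjc0 mulr0.
by rewrite /evec eqxx conjc1 mulr1.
Qed.

Lemma inner_evecl (c : int -> C) (j : int) : inner (evec j) c = (c j)^*.
Proof.
rewrite /inner (@sumZ_single _ j) => [|n nj]; last by rewrite evec_neq // mul0r.
by rewrite /evec eqxx mul1r.
Qed.

Lemma selfadjoint_Vop_fourier (phi : R -> C) (i j : nat) :
  selfadjoint_H2 (Vop phi) ->
  fourier phi (2 * j%:Z - Kindex i) = (fourier phi (2 * i%:Z - Kindex j))^*.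
Proof.
move=> sa; have := sa _ _ (inH2_evec i) (inH2_evec j).
by rewrite inner_evecr inner_evecl !Vop_evec.
Qed.

Lemma selfadjoint_Vop_fourier0 (phi : R -> C) :
  (forall n, fourier phi n = 0) -> selfadjoint_H2 (Vop phi).
Proof.
move=> phi0 f g _ _.
have Vop0 c : Vop phi c = fun _ => 0.
  apply/funext => m; rewrite /Vop /Wop /Pproj /Mult; case: ifP => // _.
  by under eq_fun do rewrite phi0 mul0r; exact: sumZ0.
rewrite !Vop0 /inner; under eq_fun do rewrite mul0r.
by rewrite sumZ0; under eq_fun do rewrite conjc0 mulr0; rewrite sumZ0.
Qed.

End BasisVectors.

(* Lets [filterS] and [filterS2] act directly on [{ae leb, _}] statements. *)
Instance ae_lebesgue_filter (R : realType) :
  Filter (nbhs (almost_everywhere (@lebesgue_measure R))) := ae_filter_ringOfSetsType _.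

Section CircleIntegrals.
Variable R : realType.
Local Notation leb := (@lebesgue_measure R).
Local Notation circ := (@circ R).
Local Notation Rint f := (Rintegral leb circ f).
Implicit Types (f g : R -> R) (c k : R).

Lemma measurable_circ : measurable circ.
Proof. exact: measurable_itv. Qed.

Lemma lebesgue_circ : leb circ = (2 * pi)%:E.
Proof.
by rewrite /circ lebesgue_measure_itv /= lte_fin mulr_gt0 ?pi_gt0 //= oppr0 adde0.
Qed.

Definition LinftyR (f : R -> R) : Prop :=
  measurable_fun circ f /\ exists M : R, {ae leb, forall t, circ t -> `|f t| <= M}.

Lemma LinftyR_integrable f : LinftyR f -> leb.-integrable circ (EFin \o f).
Proof.
move=> [mf [M fM]]; apply/integrableP; split; first exact/measurable_EFinP.
apply: (@le_lt_trans _ _ ((`|M|)%:E * leb circ)%E); last first.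
  by rewrite lebesgue_circ -EFinM ltry.
apply: integral_le_bound => //; first exact: measurable_circ.
  exact/measurable_EFinP.
move: fM; apply: filterS => t fMt circ_t; rewrite lee_fin.
exact: le_trans (fMt circ_t) (ler_norm M).
Qed.

Lemma LinftyR_cont f M : continuous f -> (forall t, `|f t| <= M) -> LinftyR f.
Proof.
move=> cf fM; split; last by exists M; apply: aeW.
exact: measurable_funS (continuous_measurable_fun cf).
Qed.

Lemma LinftyR_cst c : LinftyR (fun _ => c).
Proof. by apply: (@LinftyR_cont _ `|c|) => //; exact: cst_continuous. Qed.

Lemma continuous_cosM k : continuous (fun t => cos (k * t)).
Proof.
by move=> x; apply: continuous_comp; [exact: mulrl_continuous | exact: continuous_cos].
Qed.

Lemma continuous_sinM k : continuous (fun t => sin (k * t)).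
Proof.
by move=> x; apply: continuous_comp; [exact: mulrl_continuous | exact: continuous_sin].
Qed.

Lemma LinftyR_cos k : LinftyR (fun t => cos (k * t)).
Proof. by apply: (@LinftyR_cont _ 1); [exact: continuous_cosM | move=> t; exact: cos_max]. Qed.

Lemma LinftyR_sin k : LinftyR (fun t => sin (k * t)).
Proof. by apply: (@LinftyR_cont _ 1); [exact: continuous_sinM | move=> t; exact: sin_max]. Qed.

Lemma LinftyRM f g : LinftyR f -> LinftyR g -> LinftyR (fun t => f t * g t).
Proof.
move=> [mf [M fM]] [mg [N gN]]; split; first exact: measurable_funM.
exists (`|M| * `|N|); move: fM gN; apply: filterS2 => t fMt gNt circ_t.
rewrite normrM; apply: ler_pM => //.
  exact: le_trans (fMt circ_t) (ler_norm _).
exact: le_trans (gNt circ_t) (ler_norm _).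
Qed.

Lemma LinftyRD f g : LinftyR f -> LinftyR g -> LinftyR (fun t => f t + g t).
Proof.
move=> [mf [M fM]] [mg [N gN]]; split; first exact: measurable_funD.
exists (M + N); move: fM gN; apply: filterS2 => t fMt gNt circ_t.
exact: le_trans (ler_normD _ _) (lerD (fMt circ_t) (gNt circ_t)).
Qed.

Lemma LinftyRZ c f : LinftyR f -> LinftyR (fun t => c * f t).
Proof. exact/LinftyRM/LinftyR_cst. Qed.

Lemma LinftyRB f g : LinftyR f -> LinftyR g -> LinftyR (fun t => f t - g t).
Proof.
move=> Lf Lg; have := LinftyRD Lf (LinftyRZ (-1) Lg).
by under eq_fun do rewrite mulN1r.
Qed.

Lemma LinftyR_sum (F : nat -> R -> R) (N : nat) : (forall i, LinftyR (F i)) ->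
  LinftyR (fun t => \sum_(i < N) F i t).
Proof.
move=> LF; elim: N => [|N IH].
  by under eq_fun do rewrite big_ord0; exact: LinftyR_cst.
by under eq_fun do rewrite big_ord_recr /=; exact: LinftyRD.
Qed.

Lemma Rint_ae0 f : measurable_fun circ f ->
  {ae leb, forall t, circ t -> f t = 0} -> Rint f = 0.
Proof.
move=> mf f0; rewrite /Rintegral (@ae_eq_integral _ _ _ _ _ (fun _ => 0%:E)) //=.
- by rewrite integral0.
- exact: measurable_circ.
- exact/measurable_EFinP.
- by move: f0; apply: filterS => t ft circ_t; rewrite /= ft.
Qed.

Lemma RintD f g : LinftyR f -> LinftyR g ->
  Rint (fun t => f t + g t) = Rint f + Rint g.
Proof.
by move=> Lf Lg; apply: RintegralD; [exact: measurable_circ | exact: LinftyR_integrable..].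
Qed.

Lemma RintB f g : LinftyR f -> LinftyR g ->
  Rint (fun t => f t - g t) = Rint f - Rint g.
Proof.
by move=> Lf Lg; apply: RintegralB; [exact: measurable_circ | exact: LinftyR_integrable..].
Qed.

Lemma RintZ c f : LinftyR f -> Rint (fun t => c * f t) = c * Rint f.
Proof. by move=> Lf; apply: RintegralZl; [exact: measurable_circ | exact: LinftyR_integrable]. Qed.

Lemma Rint_sum (F : nat -> R -> R) (N : nat) : (forall i, LinftyR (F i)) ->
  Rint (fun t => \sum_(i < N) F i t) = \sum_(i < N) Rint (F i).
Proof.
move=> LF; elim: N => [|N IH].
  by under eq_Rintegral do rewrite big_ord0; rewrite big_ord0 Rint_ae0 //; exact: aeW.
rewrite big_ord_recr /= -IH -RintD //; last exact: LinftyR_sum.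
by apply: eq_Rintegral => t _; rewrite big_ord_recr.
Qed.

End CircleIntegrals.
Arguments measurable_circ {R}.
Arguments lebesgue_circ {R}.
#[global] Hint Resolve LinftyR_cos LinftyR_sin : core.

Section Orthogonality.
Variable R : realType.
Local Notation leb := (@lebesgue_measure R).
Local Notation circ := (@circ R).
Local Notation Rint f := (Rintegral leb circ f).
Implicit Types (k x : R).

Lemma is_derive_sinM k x : is_derive x 1 (fun t => sin (k * t)) (k * cos (k * x)).
Proof.
have dM : is_derive x 1 ( *%R k) k.
  by have := is_deriveZ k (is_derive_id x 1); rewrite [k%:A]mulr1.
by rewrite mulrC; exact: (is_derive1_comp (is_derive_sin _) dM).
Qed.

Lemma sin_nat2pi (n : nat) : sin (n%:R * (2 * pi)) = 0 :> R.
Proof.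
by rewrite mulr_natl mulr_natl -[_ *+ n]add0r periodicn ?sin0 //; exact: sinD2pi.
Qed.

Lemma Rint_cos_succ (n : nat) : Rint (fun t => cos (n.+1%:R * t)) = 0.
Proof.
set k : R := n.+1%:R; have k0 : k != 0 by rewrite pnatr_eq0.
suff : Rint (fun t => k * cos (k * t)) = 0.
  by rewrite RintZ // => /eqP; rewrite mulf_eq0 (negbTE k0) => /eqP.
rewrite /Rintegral (@continuous_FTC2 _ _ (fun t => sin (k * t))).
- by rewrite mulr0 sin0 /k sin_nat2pi /= subrr.
- by rewrite mulr_gt0 ?pi_gt0.
- by apply: continuous_in_subspaceT => x _; apply: cvgMl_tmp; exact: continuous_cosM.
- split.
  + by move=> x _; case: (is_derive_sinM k x).
  + by apply: cvg_at_right_filter; exact: continuous_sinM.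
  + by apply: cvg_at_left_filter; exact: continuous_sinM.
- by move=> x _; case: (is_derive_sinM k x) => _; rewrite derive1E.
Qed.

Lemma Rint_cos (k : int) :
  Rint (fun t => cos (k%:~R * t)) = if k == 0 then 2 * pi else 0.
Proof.
case: k => [[|n]|n] /=.
- under eq_Rintegral do rewrite mul0r cos0.
  by rewrite (Rintegral_cst leb measurable_circ 1) mul1r (congr1 fine lebesgue_circ).
- exact: Rint_cos_succ.
- rewrite -(Rint_cos_succ n); apply: eq_Rintegral => t _.
  by rewrite NegzE mulrNz mulNr cosN.
Qed.

Lemma mul_cos_cos (a b : R) : cos a * cos b = 2^-1 * (cos (a - b) + cos (a + b)).
Proof. by rewrite !cosD cosN sinN; field. Qed.

Lemma mul_sin_sin (a b : R) : sin a * sin b = 2^-1 * (cos (a - b) - cos (a + b)).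
Proof. by rewrite !cosD cosN sinN; field. Qed.

Lemma mul_sin_cos (a b : R) : sin a * cos b = 2^-1 * (sin (a - b) + sin (a + b)).
Proof. by rewrite !sinD cosN sinN; field. Qed.

Lemma mul_cos_sin (a b : R) : cos a * sin b = 2^-1 * (sin (a + b) - sin (a - b)).
Proof. by rewrite !sinD cosN sinN; field. Qed.

Lemma Rint_cos_succB_succD (i j : nat) :
  Rint (fun t => cos ((i.+1%:R - j.+1%:R) * t)) = (if i == j then 2 * pi else 0) /\
  Rint (fun t => cos ((i.+1%:R + j.+1%:R) * t)) = 0.
Proof.
have := Rint_cos (i.+1%:Z - j.+1%:Z); have := Rint_cos (i.+1%:Z + j.+1%:Z).
rewrite intrD intrB !pmulrn; case: eqP => [|_ ->]; first lia.
have -> : (i.+1%:Z - j.+1%:Z == 0) = (i == j) by apply/eqP/eqP; lia.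
by move=> ->.
Qed.

Lemma Rint_cos_cos (i j : nat) :
  Rint (fun t => cos (i.+1%:R * t) * cos (j.+1%:R * t)) = if i == j then pi else 0.
Proof.
have [Rint_diff Rint_sum] := Rint_cos_succB_succD i j.
under eq_Rintegral do rewrite mul_cos_cos -mulrBl -mulrDl.
rewrite RintZ ?RintD ?Rint_diff ?Rint_sum; try exact: LinftyRD; try exact: LinftyR_cos.
by case: eqP => _; field.
Qed.

Lemma Rint_sin_sin (i j : nat) :
  Rint (fun t => sin (i.+1%:R * t) * sin (j.+1%:R * t)) = if i == j then pi else 0.
Proof.
have [Rint_diff Rint_sum] := Rint_cos_succB_succD i j.
under eq_Rintegral do rewrite mul_sin_sin -mulrBl -mulrDl.
rewrite RintZ ?RintB ?Rint_diff ?Rint_sum; try exact: LinftyRB; try exact: LinftyR_cos.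
by case: eqP => _; field.
Qed.

End Orthogonality.

Section Bessel.
Variable R : realType.
Local Notation leb := (@lebesgue_measure R).
Local Notation circ := (@circ R).
Local Notation Rint f := (Rintegral leb circ f).

Variables (a : R) (e : nat -> R -> R).
Hypothesis a_gt0 : 0 < a.
Hypothesis Linfty_e : forall i, LinftyR (e i).
Hypothesis Rint_e_e : forall i j, Rint (fun t => e i t * e j t) = if i == j then a else 0.

Lemma Rint_mul_combination (u : R -> R) (c : nat -> R) (N : nat) : LinftyR u ->
  Rint (fun t => u t * \sum_(i < N) c i * e i t) =
  \sum_(i < N) c i * Rint (fun t => u t * e i t).
Proof.
move=> Lu; under eq_Rintegral do rewrite mulr_sumr.
rewrite (@Rint_sum _ (fun i t => u t * (c i * e i t))) => [|i]; last first.
  exact/LinftyRM/LinftyRZ.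
apply: eq_bigr => i _; rewrite -RintZ; last exact: LinftyRM.
by apply: eq_Rintegral => t _; rewrite mulrCA.
Qed.

Lemma bessel_inequality (u : R -> R) (N : nat) : LinftyR u ->
  \sum_(i < N) Rint (fun t => u t * e i t) ^+ 2 <= a * Rint (fun t => u t * u t).
Proof.
move=> Lu; set c := fun i => Rint (fun t => u t * e i t).
set T := fun t => \sum_(i < N) c i * e i t.
have LT : LinftyR T by apply: (@LinftyR_sum _ (fun i t => c i * e i t)) => i; exact: LinftyRZ.
have Rint_uT : Rint (fun t => u t * T t) = \sum_(i < N) c i ^+ 2.
  by rewrite /T Rint_mul_combination //; apply: eq_bigr => i _; rewrite expr2.
have Rint_eT (i : 'I_N) : Rint (fun t => T t * e i t) = c i * a.
  under eq_Rintegral do rewrite mulrC.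
  rewrite /T Rint_mul_combination // (bigD1 i) //= Rint_e_e eqxx big1 ?addr0 //.
  move=> j ji; rewrite Rint_e_e ifN ?mulr0 //.
  by apply: contra ji => /eqP ij; apply/eqP/val_inj.
have Rint_TT : Rint (fun t => T t * T t) = a * \sum_(i < N) c i ^+ 2.
  rewrite {2}/T Rint_mul_combination // mulr_sumr; apply: eq_bigr => i _.
  by rewrite Rint_eT mulrA mulrC expr2.
have expand : Rint (fun t => (a * u t - T t) ^+ 2) =
    a * a * Rint (fun t => u t * u t) - 2 * a * Rint (fun t => u t * T t)
    + Rint (fun t => T t * T t).
  have -> : (fun t => (a * u t - T t) ^+ 2) =
      (fun t => a * a * (u t * u t) - 2 * a * (u t * T t) + T t * T t).
    by apply/funext => t; ring.
  have Luu := LinftyRM Lu Lu; have LuT := LinftyRM Lu LT; have LTT := LinftyRM LT LT.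
  by rewrite RintD ?RintB ?RintZ //; do ?[apply: LinftyRB | apply: LinftyRZ].
have sq_ge0 : 0 <= Rint (fun t => (a * u t - T t) ^+ 2).
  by apply: Rintegral_ge0 => t _; exact: sqr_ge0.
rewrite expand Rint_uT Rint_TT in sq_ge0.
rewrite -subr_ge0 -(pmulr_rge0 _ a_gt0).
set A := Rint (fun t => u t * u t); set S := \sum_(i < N) _.
by have -> : a * (a * A - S) = a * a * A - 2 * a * S + a * S by ring.
Qed.

End Bessel.

Section RiemannLebesgue.
Variable R : realType.
Local Notation leb := (@lebesgue_measure R).
Local Notation circ := (@circ R).
Local Notation Rint f := (Rintegral leb circ f).

Lemma cvg0_bounded_sqr_sums (c : nat -> R) (K : R) :
  (forall N, \sum_(i < N) c i ^+ 2 <= K) -> c n @[n --> \oo] --> 0.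
Proof.
move=> cK; have : cvgn (series (fun i => c i ^+ 2)).
  apply: nondecreasing_is_cvgn.
    move=> m n mn; rewrite /series /= (big_cat_nat (leq0n m) mn) /= lerDl.
    by apply: sumr_ge0 => i _; exact: sqr_ge0.
  by exists K => _ [N _ <-]; rewrite /series /= big_mkord.
move=> /cvg_series_cvg_0 /cvgr0Pnorm_lt c2_cvg0; apply/cvgr0Pnorm_lt => e e0.
apply: filterS (c2_cvg0 _ (exprn_gt0 2 e0)) => n /=.
by rewrite normrX ltr_pXn2r // nnegrE ltW.
Qed.

Lemma Rint_cos_cvg0 (u : R -> R) : LinftyR u ->
  Rint (fun t => u t * cos (n%:R * t)) @[n --> \oo] --> 0.
Proof.
move=> Lu; rewrite -cvg_shiftS /=.
apply: (@cvg0_bounded_sqr_sums _ (pi * Rint (fun t => u t * u t))) => N.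
exact: (@bessel_inequality R pi (fun i t => cos (i.+1%:R * t)) (pi_gt0 R)
  (fun i => LinftyR_cos i.+1%:R) (@Rint_cos_cos R)).
Qed.

Lemma Rint_sin_cvg0 (u : R -> R) : LinftyR u ->
  Rint (fun t => u t * sin (n%:R * t)) @[n --> \oo] --> 0.
Proof.
move=> Lu; rewrite -cvg_shiftS /=.
apply: (@cvg0_bounded_sqr_sums _ (pi * Rint (fun t => u t * u t))) => N.
exact: (@bessel_inequality R pi (fun i t => sin (i.+1%:R * t)) (pi_gt0 R)
  (fun i => LinftyR_sin i.+1%:R) (@Rint_sin_sin R)).
Qed.

End RiemannLebesgue.

Section FourierCoefficients.
Variable R : realType.
Local Notation C := R[i].
Local Notation leb := (@lebesgue_measure R).
Local Notation circ := (@circ R).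
Local Notation Rint f := (Rintegral leb circ f).
Implicit Types (phi : R -> C) (z : C).

Lemma reC_conj z : reC z^* = reC z. Proof. by case: z. Qed.

Lemma imC_conj z : imC z^* = - imC z. Proof. by case: z. Qed.

Lemma reC_imC_eq0 z : reC z = 0 -> imC z = 0 -> z = 0.
Proof. by case: z => x y /= -> ->. Qed.

Lemma normr_reC_le z : `|reC z| <= cmod z.
Proof. by rewrite /cmod -sqrtr_sqr ler_wsqrtr // lerDl sqr_ge0. Qed.

Lemma normr_imC_le z : `|imC z| <= cmod z.
Proof. by rewrite /cmod -sqrtr_sqr ler_wsqrtr // lerDr sqr_ge0. Qed.

Lemma Linfty_ReIm phi : Linfty phi ->
  LinftyR (fun t => reC (phi t)) /\ LinftyR (fun t => imC (phi t)).
Proof.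
move=> [mre [mim [M phiM]]]; split; split => //; exists M; move: phiM;
  apply: filterS => t phiMt circ_t.
  exact: le_trans (normr_reC_le _) (phiMt circ_t).
exact: le_trans (normr_imC_le _) (phiMt circ_t).
Qed.

Lemma reC_fourier phi n : Linfty phi -> reC (fourier phi n) = (2 * pi)^-1 *
  (Rint (fun t => reC (phi t) * cos (n%:~R * t)) +
   Rint (fun t => imC (phi t) * sin (n%:~R * t))).
Proof. by move=> /Linfty_ReIm[Lre Lim]; rewrite /= RintD //; exact: LinftyRM. Qed.

Lemma imC_fourier phi n : Linfty phi -> imC (fourier phi n) = (2 * pi)^-1 *
  (Rint (fun t => imC (phi t) * cos (n%:~R * t)) -
   Rint (fun t => reC (phi t) * sin (n%:~R * t))).
Proof. by move=> /Linfty_ReIm[Lre Lim]; rewrite /= RintB //; exact: LinftyRM. Qed.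

Lemma reC_fourier_cvg0 phi : Linfty phi -> reC (fourier phi n%:Z) @[n --> \oo] --> 0.
Proof.
move=> Lphi; have [Lre Lim] := Linfty_ReIm Lphi.
under eq_fun do rewrite reC_fourier //.
rewrite -(mulr0 (2 * pi)^-1) -(addr0 0).
by apply: cvgMl_tmp; apply: cvgD; [exact: Rint_cos_cvg0 | exact: Rint_sin_cvg0].
Qed.

Lemma imC_fourier_cvg0 phi : Linfty phi -> imC (fourier phi n%:Z) @[n --> \oo] --> 0.
Proof.
move=> Lphi; have [Lre Lim] := Linfty_ReIm Lphi.
under eq_fun do rewrite imC_fourier //.
rewrite -(mulr0 (2 * pi)^-1) -(subr0 0).
by apply: cvgMl_tmp; apply: cvgB; [exact: Rint_cos_cvg0 | exact: Rint_sin_cvg0].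
Qed.

Lemma eq0_of_cvg0_orbit (a : nat -> R) (g : nat -> nat) :
  a n @[n --> \oo] --> 0 -> (forall p, (p < g p)%N) ->
  (forall p, `|a p| = `|a (g p)|) -> forall p, a p = 0.
Proof.
move=> /cvgr0Pnorm_lt a_cvg0 g_gt a_g p; apply/eqP; apply: contraT => ap0.
have [N _ aN] : \forall n \near \oo, `|a n| < `|a p| by apply: a_cvg0; rewrite normr_gt0.
have orbit k : `|a p| = `|a (iter k g p)| /\ (k <= iter k g p)%N.
  elim: k => [|k [ak k_le]] //=; split; first by rewrite ak a_g.
  exact: leq_ltn_trans k_le (g_gt _).
have [aNp N_le] := orbit N.
by have := aN _ N_le; rewrite /= -aNp ltxx.
Qed.

End FourierCoefficients.

Section SelfadjointSymbol.
Variable R : realType.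
Local Notation C := R[i].
Implicit Types (phi : R -> C).

Lemma Kindex_double (p : nat) : Kindex p.*2 = p.
Proof. by rewrite /Kindex odd_double /= doubleK. Qed.

Lemma Kindex_double_succ (p : nat) : Kindex p.*2.+1 = - p%:Z - 1.
Proof. by rewrite /Kindex /= odd_double /= uphalf_double. Qed.

Section Relations.
Variable phi : R -> C.
Hypothesis sa : selfadjoint_H2 (Vop phi).

Lemma selfadjoint_fourier_succ (p : nat) :
  fourier phi p.+1%:Z = (fourier phi (4 * p + 2)%N%:Z)^*.
Proof.
have := selfadjoint_Vop_fourier 0 p.*2.+1 sa; rewrite Kindex_double_succ /Kindex /=.
have -> : 2 * p.*2.+1%:Z - 0 = (4 * p + 2)%N%:Z by lia.
have -> : 2 * 0 - (- p%:Z - 1) = p.+1%:Z by lia.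
by move=> ->; rewrite conjCK.
Qed.

Lemma selfadjoint_fourier_opp (p : nat) :
  fourier phi (- p%:Z) = (fourier phi (4 * p)%N%:Z)^*.
Proof.
have := selfadjoint_Vop_fourier 0 p.*2 sa; rewrite Kindex_double /Kindex /=.
have -> : 2 * p.*2%:Z - 0 = (4 * p)%N%:Z by lia.
have -> : 2 * 0 - p%:Z = - p%:Z by lia.
by move=> ->; rewrite conjCK.
Qed.

Lemma selfadjoint_fourier0 : fourier phi 0 = (fourier phi 9%:Z)^*.
Proof. by have := selfadjoint_Vop_fourier 4 1 sa. Qed.

End Relations.

Lemma selfadjoint_fourier_eq0 phi : Linfty phi -> selfadjoint_H2 (Vop phi) ->
  forall n, fourier phi n = 0.
Proof.
move=> Lphi sa.
have fourier_orbit p : fourier phi (4 * p + 1).+1%:Z = (fourier phi p.+1%:Z)^*.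
  by rewrite (selfadjoint_fourier_succ sa p) conjCK; congr (fourier phi (Posz _)); lia.
have g_gt p : (p < 4 * p + 1)%N by lia.
have succ_eq0 p : fourier phi p.+1%:Z = 0.
  apply: reC_imC_eq0.
    apply: (@eq0_of_cvg0_orbit _ (fun n => reC (fourier phi n.+1%:Z)) _ _ g_gt) => [|q].
      by rewrite (cvg_shiftS (fun n => reC (fourier phi n%:Z))); exact: reC_fourier_cvg0.
    by rewrite fourier_orbit reC_conj.
  apply: (@eq0_of_cvg0_orbit _ (fun n => imC (fourier phi n.+1%:Z)) _ _ g_gt) => [|q].
    by rewrite (cvg_shiftS (fun n => imC (fourier phi n%:Z))); exact: imC_fourier_cvg0.
  by rewrite fourier_orbit imC_conj normrN.
case=> [[|p]|p].
- by rewrite selfadjoint_fourier0 // succ_eq0 conjC0.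
- exact: succ_eq0.
- rewrite NegzE selfadjoint_fourier_opp //.
  have -> : (4 * p.+1 = (4 * p + 3).+1)%N by lia.
  by rewrite succ_eq0 conjC0.
Qed.

End SelfadjointSymbol.

Section TrigonometricPolynomials.
Variable R : realType.
Local Notation leb := (@lebesgue_measure R).
Local Notation circ := (@circ R).
Local Notation Rint f := (Rintegral leb circ f).

Inductive trigpoly : (R -> R) -> Prop :=
| trigpoly_cos (k : int) : trigpoly (fun t => cos (k%:~R * t))
| trigpoly_sin (k : int) : trigpoly (fun t => sin (k%:~R * t))
| trigpolyD f g : trigpoly f -> trigpoly g -> trigpoly (fun t => f t + g t)
| trigpolyZ (c : R) f : trigpoly f -> trigpoly (fun t => c * f t).

Lemma eq_trigpoly f g : f =1 g -> trigpoly f -> trigpoly g.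
Proof. by move=> /funext ->. Qed.

Lemma trigpoly_Linfty f : trigpoly f -> LinftyR f.
Proof.
elim=> {f} [k|k|f g _ Lf _ Lg|c f _ Lf]; [exact: LinftyR_cos | exact: LinftyR_sin |
  exact: LinftyRD | exact: LinftyRZ].
Qed.

Lemma Rint_trigpoly_eq0 (u : R -> R) f : LinftyR u ->
  (forall k : int, Rint (fun t => u t * cos (k%:~R * t)) = 0) ->
  (forall k : int, Rint (fun t => u t * sin (k%:~R * t)) = 0) ->
  trigpoly f -> Rint (fun t => u t * f t) = 0.
Proof.
move=> Lu u_cos u_sin; elim=> {f} [k|k|f g tf IHf tg IHg|c f tf IHf] //.
- under eq_Rintegral do rewrite mulrDr.
  by rewrite RintD ?IHf ?IHg ?addr0 //; apply: LinftyRM => //; exact: trigpoly_Linfty.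
- under eq_Rintegral do rewrite mulrCA.
  by rewrite RintZ ?IHf ?mulr0 //; apply: LinftyRM => //; exact: trigpoly_Linfty.
Qed.

Lemma trigpoly_cst (c : R) : trigpoly (fun _ => c).
Proof.
by apply: eq_trigpoly (trigpolyZ c (trigpoly_cos 0)) => t; rewrite mul0r cos0 mulr1.
Qed.

Let mulrz_predD (k : int) (t : R) : k%:~R * t - t = (k - 1)%:~R * t.
Proof. by rewrite intrB mulrBl mul1r. Qed.

Let mulrz_succD (k : int) (t : R) : k%:~R * t + t = (k + 1)%:~R * t.
Proof. by rewrite intrD mulrDl mul1r. Qed.

Lemma trigpolyMcos f : trigpoly f -> trigpoly (fun t => f t * cos t).
Proof.
elim=> {f} [k|k|f g _ IHf _ IHg|c f _ IHf].
- apply: eq_trigpoly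
    (trigpolyZ 2^-1 (trigpolyD (trigpoly_cos (k - 1)) (trigpoly_cos (k + 1)))).
  by move=> t; rewrite mul_cos_cos mulrz_predD mulrz_succD.
- apply: eq_trigpoly
    (trigpolyZ 2^-1 (trigpolyD (trigpoly_sin (k - 1)) (trigpoly_sin (k + 1)))).
  by move=> t; rewrite mul_sin_cos mulrz_predD mulrz_succD.
- by apply: eq_trigpoly (trigpolyD IHf IHg) => t; rewrite mulrDl.
- by apply: eq_trigpoly (trigpolyZ c IHf) => t; rewrite mulrA.
Qed.

Lemma trigpolyMsin f : trigpoly f -> trigpoly (fun t => f t * sin t).
Proof.
elim=> {f} [k|k|f g _ IHf _ IHg|c f _ IHf].
- apply: eq_trigpoly (trigpolyZ 2^-1
    (trigpolyD (trigpoly_sin (k + 1)) (trigpolyZ (-1) (trigpoly_sin (k - 1))))).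
  by move=> t; rewrite mul_cos_sin mulrz_predD mulrz_succD mulN1r.
- apply: eq_trigpoly (trigpolyZ 2^-1
    (trigpolyD (trigpoly_cos (k - 1)) (trigpolyZ (-1) (trigpoly_cos (k + 1))))).
  by move=> t; rewrite mul_sin_sin mulrz_predD mulrz_succD mulN1r.
- by apply: eq_trigpoly (trigpolyD IHf IHg) => t; rewrite mulrDl.
- by apply: eq_trigpoly (trigpolyZ c IHf) => t; rewrite mulrA.
Qed.

Definition cos_bump (x0 t : R) : R := 2^-1 * (1 + cos (t - x0)).

Lemma cos_bump_ge0_le1 x0 t : 0 <= cos_bump x0 t <= 1.
Proof.
have := cos_max (t - x0); rewrite ler_norml /cos_bump => /andP[? ?].
by apply/andP; split; lra.
Qed.

Lemma trigpolyM_cos_bump x0 f : trigpoly f -> trigpoly (fun t => f t * cos_bump x0 t).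
Proof.
move=> tf; apply: eq_trigpoly (trigpolyD (trigpolyZ 2^-1 tf)
  (trigpolyD (trigpolyZ (2^-1 * cos x0) (trigpolyMcos tf))
             (trigpolyZ (2^-1 * sin x0) (trigpolyMsin tf)))).
by move=> t; rewrite /cos_bump cosB; ring.
Qed.

Lemma trigpoly_horner_cos_bump x0 (p : {poly R}) : trigpoly (fun t => p.[cos_bump x0 t]).
Proof.
elim/poly_ind: p => [|p c IH].
  by apply: eq_trigpoly (trigpoly_cst 0) => t; rewrite horner0.
apply: eq_trigpoly (trigpolyD (trigpolyM_cos_bump x0 IH) (trigpoly_cst c)) => t.
by rewrite hornerMXaddC.
Qed.

End TrigonometricPolynomials.

Section PeakPolynomials.
Variable R : realType.
Implicit Types (s x : R) (k N : nat).

Lemma bernoulli_ineq x N : -1 <= x -> 1 + N%:R * x <= (1 + x) ^+ N.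
Proof.
move=> x_ge; elim: N => [|N IH]; first by rewrite mul0r addr0 expr0.
have N_ge0 : 0 <= N%:R :> R by [].
by rewrite exprSr -natr1; nra.
Qed.

(* Since peak_deg s0 k is about s0^-k, peak_deg s0 k * s^k tends to 0 for
   s < s0 and to +oo for s > s0; hence (peak s0 k).[s] tends to 0, resp. 1. *)
Definition peak_deg (s0 : R) k : nat := Num.truncn (s0^-1 ^+ k).

Definition peak (s0 : R) k : {poly R} := 1 - (1 - 'X^k) ^+ peak_deg s0 k.

Lemma horner_peak (s0 : R) k s : (peak s0 k).[s] = 1 - (1 - s ^+ k) ^+ peak_deg s0 k.
Proof. by rewrite /peak !hornerE. Qed.

Lemma peak_ge0_le1 (s0 : R) k s : 0 <= s <= 1 -> 0 <= (peak s0 k).[s] <= 1.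
Proof.
move=> /andP[s_ge0 s_le1]; rewrite horner_peak.
have /andP[y_ge0 y_le1] : 0 <= 1 - s ^+ k <= 1.
  by rewrite subr_ge0 exprn_ile1 //= lerBlDr lerDl exprn_ge0.
by rewrite subr_ge0 exprn_ile1 //= lerBlDr lerDl exprn_ge0.
Qed.

Lemma peak_cvg0 (s0 s : R) : s0 <= 1 -> 0 <= s < s0 -> (peak s0 k).[s] @[k --> \oo] --> 0.
Proof.
move=> s0_le1 /andP[s_ge0 s_lt]; have s0_gt0 := le_lt_trans s_ge0 s_lt.
apply: (@squeeze_cvgr _ _ _ _ (fun _ => 0) (fun k => (s / s0) ^+ k)); last 2 first.
- exact: cvg_cst.
- apply: cvg_expr; rewrite ger0_norm ?ltr_pdivrMr ?mul1r //.
  by rewrite divr_ge0 // ltW.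
apply: nearW => k; rewrite (andP (peak_ge0_le1 s0 k _)).1 /=; last first.
  by rewrite s_ge0 (le_trans (ltW s_lt)).
rewrite horner_peak; set x := s ^+ k; set N := peak_deg s0 k.
have x_ge0 : 0 <= x by rewrite exprn_ge0.
have x_le1 : x <= 1 by rewrite exprn_ile1 // (le_trans (ltW s_lt)).
have := bernoulli_ineq N (_ : -1 <= - x); rewrite mulrN => /(_ ltac:(lra)) bern.
have N_le : N%:R <= s0^-1 ^+ k by rewrite truncn_le exprn_ge0 // invr_ge0 ltW.
have -> : (s / s0) ^+ k = s0^-1 ^+ k * x by rewrite exprMn mulrC.
by apply: le_trans (ler_wpM2r x_ge0 N_le); lra.
Qed.

Lemma peak_cvg1 (s0 s : R) : 0 < s0 -> s0 < s <= 1 ->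
  (peak s0 k).[s] @[k --> \oo] --> (1 : R).
Proof.
move=> s0_gt0 /andP[s0_lt s_le1]; have s_gt0 := lt_trans s0_gt0 s0_lt.
suff pow_cvg0 : (1 - s ^+ k) ^+ peak_deg s0 k @[k --> \oo] --> 0.
  under eq_fun do rewrite horner_peak.
  by have := cvgB (cvg_cst (1 : R)) pow_cvg0; rewrite subr0; apply.
apply: (@squeeze_cvgr _ _ _ _ (fun _ => 0) (fun k => (s0 / s) ^+ k)); last 2 first.
- exact: cvg_cst.
- apply: cvg_expr; rewrite ger0_norm ?ltr_pdivrMr ?mul1r //.
  by rewrite divr_ge0 // ltW.
apply: nearW => k; set x := s ^+ k; set N := peak_deg s0 k.
have x_gt0 : 0 < x by rewrite exprn_gt0.
have x_le1 : x <= 1 by rewrite exprn_ile1 // ltW.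
rewrite exprn_ge0 ?subr_ge0 //=.
have bern_le1 : (1 - x) ^+ N * (1 + N%:R * x) <= 1.
  apply: (@le_trans _ _ ((1 - x) ^+ N * (1 + x) ^+ N)).
    by rewrite ler_wpM2l ?exprn_ge0 ?subr_ge0 // bernoulli_ineq //; lra.
  by rewrite -exprMn exprn_ile1 // ?mulr_ge0 ?subr_ge0 //; nra.
have N_gt : s0^-1 ^+ k - 1 < N%:R by rewrite ltrBlDr natr1 truncnS_gt.
have c_gt0 : 0 < s0^-1 ^+ k by rewrite exprn_gt0 // invr_gt0.
have -> : (s0 / s) ^+ k = (s0^-1 ^+ k * x)^-1.
  by rewrite /x -exprMn -exprVn invfM invrK mulrC.
rewrite -div1r ler_pdivlMr ?mulr_gt0 //; apply: le_trans bern_le1.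
by rewrite ler_wpM2l ?exprn_ge0 ?subr_ge0 //; nra.
Qed.

End PeakPolynomials.

Section ArcIndicators.
Variable R : realType.
Local Notation circ := (@circ R).

Lemma cos_arc_cmp (x0 d t : R) : 0 < d < pi -> d < x0 -> x0 + d < 2 * pi ->
  0 <= t <= 2 * pi ->
  (`|t - x0| < d -> cos d < cos (t - x0)) /\ (d < `|t - x0| -> cos (t - x0) < cos d).
Proof.
move=> /andP[d_gt0 d_ltpi] dx0 x0d /andP[t_ge0 t_le2pi].
have pi_gt0 := pi_gt0 R.
have in0pi y : 0 <= y -> y <= pi -> y \in `[0, pi] by rewrite in_itv /= => -> ->.
have cos_norm : cos `|t - x0| = cos (t - x0) by case: (ger0P (t - x0)); rewrite ?cosN.
rewrite -cos_norm; set y := `|t - x0|; have y_ge0 : 0 <= y := normr_ge0 _.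
have y_lt : y < 2 * pi - d by rewrite /y; case: (ger0P (t - x0)) => _; lra.
split => y_cmp; first by rewrite ltr_cos ?in0pi //; lra.
have [y_lepi|y_gtpi] := lerP y pi; first by rewrite ltr_cos ?in0pi //; lra.
have -> : cos y = cos (2 * pi - y).
  by rewrite -[in RHS]cosN opprB -(cosD2pi (y - 2 * pi)) -[pi *+ 2]mulr_natl subrK.
by rewrite ltr_cos ?in0pi //; lra.
Qed.

Definition circ_arc (x0 d : R) : set R := [set` `]x0 - d, x0 + d[].

Lemma peak_cos_bump_cvg (x0 d t : R) : 0 < d < pi -> d < x0 -> x0 + d < 2 * pi ->
  circ t -> t != x0 - d -> t != x0 + d ->
  (peak (2^-1 * (1 + cos d)) k).[cos_bump x0 t] @[k --> \oo] -->
    (\1_(circ_arc x0 d) t : R).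
Proof.
move=> d_bnd dx0 x0d; rewrite /circ /= in_itv /= => t_bnd tl tr.
have /andP[d_gt0 d_ltpi] := d_bnd; have pi_gt0 := pi_gt0 R.
have in0pi y : 0 <= y -> y <= pi -> y \in `[0, pi] by rewrite in_itv /= => -> ->.
have cosd_lt1 : cos d < 1 by rewrite -cos0 ltr_cos ?in0pi //; lra.
have cosd_gtN1 : -1 < cos d by rewrite -cospi ltr_cos ?in0pi //; lra.
have [cos_gt cos_lt] := cos_arc_cmp d_bnd dx0 x0d t_bnd.
have /andP[bump_ge0 bump_le1] := cos_bump_ge0_le1 x0 t.
rewrite indicE /circ_arc; case: (boolP (t \in _)).
- rewrite in_setE /= in_itv /= => /andP[tl' tr']; apply: peak_cvg1; first lra.
  rewrite bump_le1 andbT /cos_bump; have : `|t - x0| < d by rewrite ltr_norml; lra.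
  by move/cos_gt; lra.
- move=> tI; apply: peak_cvg0; first lra.
  rewrite bump_ge0 /= /cos_bump; suff /cos_lt : d < `|t - x0| by lra.
  rewrite ltNge ler_norml; apply: contra tI => /andP[? ?].
  by rewrite in_setE /= in_itv /= !lt_neqAle eq_sym tl tr /=; apply/andP; split; lra.
Qed.

End ArcIndicators.

Section VanishingIntegrals.
Variable R : realType.
Local Notation leb := (@lebesgue_measure R).
Local Notation circ := (@circ R).
Local Notation Rint f := (Rintegral leb circ f).

Lemma ae_neq2 (a b : R) (P : R -> Prop) : (forall t, t != a -> t != b -> P t) ->
  {ae leb, forall t, P t}.
Proof.
move=> abP; apply: (@negligibleS _ _ _ leb ([set a] `|` [set b])).
  move=> t /= Pt; apply: contra_notP Pt => tab.
  by apply: abP; apply/eqP => tE; apply: tab; [left|right].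
by apply: negligibleU; apply/negligibleP => //; exact: lebesgue_measure_set1.
Qed.

Lemma derive1_eq0_of_constant_on (F : R -> R) (a b x : R) :
  (forall y z, a < y < b -> a < z < b -> F y = F z) -> a < x < b -> F^`()%classic x = 0.
Proof.
move=> F_const x_ab; rewrite derive1E (@near_eq_derive _ _ _ F (cst (F x))).
  by rewrite -derive1E derive1_cst.
have x_in : x \in `]a, b[ by rewrite in_itv.
near=> y; have : y \in `]a, b[ by near: y; exact: near_in_itvoo.
by rewrite in_itv /= => y_ab; exact: F_const.
Unshelve. all: by end_near.
Qed.

Lemma ae_eq0_of_Rint_itv_eq0 (u : R -> R) : LinftyR u ->
  (forall a b, 0 < a -> a < b -> b < 2 * pi -> Rintegral leb `]a, b[ u = 0) ->
  {ae leb, forall t, circ t -> u t = 0}.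
Proof.
move=> Lu u_itv; set f := u \_ circ.
have f_int A : measurable A -> leb.-integrable A (EFin \o f).
  move=> mA; apply: integrableS (subsetT _) _ => //.
  rewrite /f -restrict_EFin; apply/(@integrable_mkcond _ _ _ leb circ _ measurable_circ).1.
  exact: LinftyR_integrable.
have f_loc : locally_integrable [set: R] f.
  by apply: integrable_locally; [exact: measurable_circ | exact: LinftyR_integrable].
set F := fun x => Rintegral leb [set` Interval (BLeft 0) (BRight x)] f.
have F_const y z : 0 < y < 2 * pi -> 0 < z < 2 * pi -> F y = F z.
  wlog yz : y z / y < z.
    move=> wlog_yz y_bnd z_bnd; case: (ltgtP y z) => [yz|zy|-> //].
      exact: wlog_yz.
    by apply/esym; exact: wlog_yz.
  move=> /andP[y_gt0 _] /andP[_ z_lt]; apply/esym/eqP.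
  rewrite -subr_eq0 /F Rintegral_itvB ?bnd_simp ?(ltW y_gt0) ?(ltW yz) //; last first.
    by apply: f_int; exact: measurable_itv.
  rewrite -Rintegral_itv_bndo_bndc; last by apply: f_int; exact: measurable_itv.
  rewrite -(u_itv y z) //; apply/eqP/eq_Rintegral => t.
  rewrite inE /= in_itv /= => /andP[? ?].
  by rewrite mem_set // /circ /= in_itv /=; apply/andP; split; lra.
have ends_neq : {ae leb, forall t, t != 0 /\ t != 2 * pi}.
  by apply: (@ae_neq2 0 (2 * pi)) => t ? ?; split.
move: (FTC1 (fun y => f_int _ (measurable_itv `[0, y])) f_loc) ends_neq.
apply: filterS2 => t FTC_t [t_neq0 t_neq2pi] circ_t.
have /andP[t_ge0 t_le2pi] : 0 <= t <= 2 * pi by move: circ_t; rewrite /circ /= in_itv.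
have t_bnd : 0 < t < 2 * pi by rewrite !lt_neqAle eq_sym t_neq0 t_neq2pi t_ge0 t_le2pi.
have [_] := FTC_t (ltac:(by rewrite ?bnd_simp ?lte_fin; case/andP: t_bnd)).
by rewrite (derive1_eq0_of_constant_on F_const t_bnd) /f patchE mem_set.
Qed.

Lemma Rint_eq0_of_bounded_cvg_indic (u : R -> R) (h : nat -> R -> R) (A : set R) :
  LinftyR u -> measurable A -> A `<=` circ ->
  (forall k, LinftyR (h k)) -> (forall k t, `|h k t| <= 1) ->
  {ae leb, forall t, circ t -> h k t @[k --> \oo] --> (\1_A t : R)} ->
  (forall k, Rint (fun t => u t * h k t) = 0) -> Rintegral leb A u = 0.
Proof.
move=> Lu mA A_circ Lh h_le1 h_cvg uh0; pose f k t := u t * h k t.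
have Lf k : LinftyR (f k) by exact: LinftyRM.
have int_f k : (\int[leb]_(t in circ) (f k t)%:E = 0)%E.
  rewrite -[LHS]fineK; first by rewrite [fine _]uh0.
  by apply: integrable_fin_num; [exact: measurable_circ | exact: LinftyR_integrable].
have m_patch : measurable_fun circ (EFin \o (u \_ A)).
  apply/measurable_EFinP; apply: (measurable_restrict u mA measurable_circ).1.
  by apply: measurable_funS measurable_circ _ Lu.1; exact: subIsetl.
have mf_ k : measurable_fun circ (fun t => (f k t)%:E).
  by apply/measurable_EFinP; exact: (Lf k).1.
have f_cvg : {ae leb, forall t, circ t ->
    (fun k => (f k t)%:E) @ \oo --> (EFin \o (u \_ A)) t}.
  move: h_cvg; apply: filterS => t h_cvg_t circ_t.
  apply: cvg_EFin; first exact: nearW.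
  by rewrite patch_indic /=; apply: cvgMl_tmp; exact: h_cvg_t.
have f_le : {ae leb, forall t k, circ t -> `|(f k t)%:E| <= `|u t|%:E}%E.
  by apply: aeW => t k _; rewrite lee_fin normrM ler_piMr.
have [_ _] := @dominated_convergence _ _ _ leb _ measurable_circ _ _ _ mf_ m_patch f_cvg
  (integrable_norm (LinftyR_integrable Lu)) f_le.
have -> : (fun k => \int[leb]_(t in circ) (f k t)%:E)%E = (fun=> 0%E).
  by apply/funext => k; exact: int_f.
move=> int_cvg; have int_patch : (\int[leb]_(t in circ) ((u \_ A) t)%:E = 0)%E.
  by apply: (cvg_unique _ int_cvg); [exact: ereal_hausdorff | exact: cvg_cst].
by rewrite -(setIidr A_circ) Rintegral_mkcondr /Rintegral int_patch.
Qed.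

End VanishingIntegrals.

Section TrigonometricMoments.
Variable R : realType.
Local Notation leb := (@lebesgue_measure R).
Local Notation circ := (@circ R).
Local Notation Rint f := (Rintegral leb circ f).

Variable u : R -> R.
Hypothesis Lu : LinftyR u.
Hypothesis u_cos : forall k : int, Rint (fun t => u t * cos (k%:~R * t)) = 0.
Hypothesis u_sin : forall k : int, Rint (fun t => u t * sin (k%:~R * t)) = 0.

Lemma Rint_arc_eq0 (x0 d : R) : 0 < d < pi -> d < x0 -> x0 + d < 2 * pi ->
  Rintegral leb (circ_arc x0 d) u = 0.
Proof.
move=> d_bnd dx0 x0d; have /andP[d_gt0 _] := d_bnd; set s0 := 2^-1 * (1 + cos d).
apply: (@Rint_eq0_of_bounded_cvg_indic _ u (fun k t => (peak s0 k).[cos_bump x0 t])) => //.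
- exact: measurable_itv.
- move=> t; rewrite /circ_arc /= in_itv /= => /andP[? ?].
  by rewrite /circ /= in_itv /=; apply/andP; split; lra.
- by move=> k; apply: trigpoly_Linfty; exact: trigpoly_horner_cos_bump.
- move=> k t; have /andP[? ?] := peak_ge0_le1 s0 k (cos_bump_ge0_le1 x0 t).
  by rewrite ger0_norm.
- apply: (@ae_neq2 _ (x0 - d) (x0 + d)) => t tl tr circ_t.
  exact: peak_cos_bump_cvg.
- by move=> k; apply: Rint_trigpoly_eq0 => //; exact: trigpoly_horner_cos_bump.
Qed.

Lemma ae_eq0_of_trig_moments_eq0 : {ae leb, forall t, circ t -> u t = 0}.
Proof.
apply: ae_eq0_of_Rint_itv_eq0 => // a b a_gt0 ab b_lt.
have pi_gt0 := pi_gt0 R.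
have := @Rint_arc_eq0 ((a + b) / 2) ((b - a) / 2); rewrite /circ_arc.
have -> : (a + b) / 2 - (b - a) / 2 = a by field.
have -> : (a + b) / 2 + (b - a) / 2 = b by field.
apply; first (apply/andP; split); lra.
Qed.

End TrigonometricMoments.

Section FourierUniqueness.
Variable R : realType.
Local Notation C := R[i].
Local Notation leb := (@lebesgue_measure R).
Local Notation circ := (@circ R).
Local Notation Rint f := (Rintegral leb circ f).
Implicit Types (phi : R -> C) (w : R -> R).

Lemma fourier_eq0_of_ae_zero phi : Linfty phi -> ae_zero phi -> forall n, fourier phi n = 0.
Proof.
move=> Lphi phi0 n; have [Lre Lim] := Linfty_ReIm Lphi.
rewrite /fourier !Rint_ae0 ?mulr0 //.
- by apply: (LinftyRB _ _).1; exact: LinftyRM.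
- by move: phi0; apply: filterS => t phit circ_t; rewrite (phit circ_t) /= !mul0r subrr.
- by apply: (LinftyRD _ _).1; exact: LinftyRM.
- by move: phi0; apply: filterS => t phit circ_t; rewrite (phit circ_t) /= !mul0r addr0.
Qed.

Lemma Rint_cosN w (k : int) :
  Rint (fun t => w t * cos ((- k)%:~R * t)) = Rint (fun t => w t * cos (k%:~R * t)).
Proof. by apply: eq_Rintegral => t _; rewrite intrN mulNr cosN. Qed.

Lemma Rint_sinN w (k : int) : LinftyR w ->
  Rint (fun t => w t * sin ((- k)%:~R * t)) = - Rint (fun t => w t * sin (k%:~R * t)).
Proof.
move=> Lw; rewrite -[RHS]mulN1r -RintZ; last exact: LinftyRM.
by apply: eq_Rintegral => t _; rewrite intrN mulNr sinN mulN1r mulrN.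
Qed.

Lemma trig_moments_eq0_of_fourier_eq0 phi :
  Linfty phi -> (forall n, fourier phi n = 0) -> forall k : int,
  [/\ Rint (fun t => reC (phi t) * cos (k%:~R * t)) = 0,
      Rint (fun t => reC (phi t) * sin (k%:~R * t)) = 0,
      Rint (fun t => imC (phi t) * cos (k%:~R * t)) = 0 &
      Rint (fun t => imC (phi t) * sin (k%:~R * t)) = 0].
Proof.
move=> Lphi phi0 k; have [Lre Lim] := Linfty_ReIm Lphi.
have inv2pi_neq0 : (2 * pi)^-1 != 0 :> R.
  by rewrite invr_eq0 mulf_neq0 // gt_eqF // pi_gt0.
have eq0 (x : R) : (2 * pi)^-1 * x = 0 -> x = 0.
  by move=> x0; apply: (mulfI inv2pi_neq0); rewrite x0 mulr0.
have := reC_fourier k Lphi; rewrite phi0 => /esym/eq0 re_k.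
have := imC_fourier k Lphi; rewrite phi0 => /esym/eq0 im_k.
have := reC_fourier (- k) Lphi; rewrite phi0 Rint_cosN Rint_sinN // => /esym/eq0 re_Nk.
have := imC_fourier (- k) Lphi; rewrite phi0 Rint_cosN Rint_sinN // => /esym/eq0 im_Nk.
by split; lra.
Qed.

Lemma ae_zero_of_fourier_eq0 phi : Linfty phi -> (forall n, fourier phi n = 0) ->
  ae_zero phi.
Proof.
move=> Lphi phi0; have [Lre Lim] := Linfty_ReIm Lphi.
have moments := trig_moments_eq0_of_fourier_eq0 Lphi phi0.
have re0 := ae_eq0_of_trig_moments_eq0 Lre
  (fun k => let: And4 m _ _ _ := moments k in m)
  (fun k => let: And4 _ m _ _ := moments k in m).
have im0 := ae_eq0_of_trig_moments_eq0 Lim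
  (fun k => let: And4 _ _ m _ := moments k in m)
  (fun k => let: And4 _ _ _ m := moments k in m).
move: re0 im0; apply: filterS2 => t re_t im_t circ_t.
exact: reC_imC_eq0 (re_t circ_t) (im_t circ_t).
Qed.

End FourierUniqueness.

Theorem mainTheorem11 (R : realType) (phi : R -> R[i]) :
  Linfty phi -> (selfadjoint_H2 (Vop phi) <-> ae_zero phi).
Proof.
move=> Lphi; split => [sa | phi0].
- exact/(ae_zero_of_fourier_eq0 Lphi)/(selfadjoint_fourier_eq0 Lphi).
- exact/selfadjoint_Vop_fourier0/(fourier_eq0_of_ae_zero Lphi).
Qed.
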